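(* Let $m\ge4$, let $\mathcal W_1$ be an $m\times m$ quadrilateral labyrinth set in $Q$, and let $L_\infty$ be the associated quadrilateral labyrinth fractal. Then the interior of $L_\infty$ in $\mathbb{R}^2$ is empty.
   Context: Let $Q$ be a convex quadrilateral in $\mathbb{R}^2$. Divide $Q$ into two triangles by its shorter diagonal (either diagonal if they have equal length). Label the vertices $Q_1,Q_2,Q_3,Q_4$ anticlockwise, starting at an endpoint of that diagonal, so that the diagonal is $Q_1Q_3$. Let $\Delta_1$ be the closed triangle $Q_1Q_2Q_3$ and $\Delta_2$ the closed triangle $Q_3Q_4Q_1$. Every $x\in Q$ has a unique representation $x=\sum_{i=1}^4\alpha_iQ_i$, defined as follows. If $x\in\Delta_1$, then $\alpha_4=0$ and $(\alpha_1,\alpha_2,\alpha_3)$ are the barycentric coordinates of $x$ in $\Delta_1$. If $x\in\Delta_2$, then $\alpha_2=0$ and $(\alpha_1,\alpha_3,\alpha_4)$ are the barycentric coordinates of $x$ in $\Delta_2$. For an ordered quadruple $V=(V_1,\dots,V_4)$ define $P_V:Q\to\mathbb{R}^2$ by $P_V(x)=\sum_i\alpha_iV_i$. For an integer $m\ge2$, define the following index sets: - $A_1=\{(k_1,k_2,k_3,0)\in\mathbb{Z}_{\ge0}^4:k_1+k_2+k_3=m-1,\ k_2\ne0\}$, - $A_2=\{(k_1,0,k_3,k_4)\in\mathbb{Z}_{\ge0}^4:k_1+k_3+k_4=m-1,\ k_4\ne0\}$, - $A_3=\{(k_1,0,k_3,0)\in\mathbb{Z}_{\ge0}^4:k_1+k_3=m-1\}$,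 - $A=A_1\cup A_2\cup A_3$. For $k\in A$, let $S_m(k)$ be the quadrilateral with ordered vertices $R_1R_2R_3R_4$ given below. - If $k\in A_1$: $R_1=\frac{(k_1+1)Q_1+k_2Q_2+k_3Q_3}{m}$, $R_2=\frac{k_1Q_1+(k_2+1)Q_2+k_3Q_3}{m}$, $R_3=\frac{k_1Q_1+k_2Q_2+(k_3+1)Q_3}{m}$, $R_4=\frac{(k_1+1)Q_1+(k_2-1)Q_2+(k_3+1)Q_3}{m}$. - If $k\in A_2$: $R_1=\frac{(k_1+1)Q_1+k_3Q_3+k_4Q_4}{m}$, $R_2=\frac{(k_1+1)Q_1+(k_3+1)Q_3+(k_4-1)Q_4}{m}$, $R_3=\frac{k_1Q_1+(k_3+1)Q_3+k_4Q_4}{m}$, $R_4=\frac{k_1Q_1+k_3Q_3+(k_4+1)Q_4}{m}$. - If $k\in A_3$: $R_1=\frac{(k_1+1)Q_1+k_3Q_3}{m}$, $R_2=\frac{k_1Q_1+Q_2+k_3Q_3}{m}$, $R_3=\frac{k_1Q_1+(k_3+1)Q_3}{m}$, $R_4=\frac{k_1Q_1+k_3Q_3+Q_4}{m}$. Let $\mathcal S_m=\{S_m(k):k\in A\}$. For $\mathcal W\subseteq\mathcal S_m$, the graph $\mathcal G(\mathcal W)$ has vertex set $\mathcal W$, with two elements adjacent iff they have a common side. An $m\times m$ quadrilateral labyrinth set ($m\ge4$) is a set $\mathcal W_1\subseteq\mathcal S_m$ satisfying three properties. (1) Tree property: $\mathcal G(\mathcal W_1)$ is a tree. (2) Exit property: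 there is exactly one $(k_1,k_2,0,0)\in A$ with $S_m(k_1,k_2,0,0)\in\mathcal W_1$ and $S_m(0,0,k_2,k_1)\in\mathcal W_1$. There is also exactly one $(k_1,0,0,k_4)\in A$ with $S_m(k_1,0,0,k_4)\in\mathcal W_1$ and $S_m(0,k_1,k_4,0)\in\mathcal W_1$. (3) Corner property: $\mathcal W_1$ contains at most one element of $\{S_m(m-1,0,0,0),S_m(0,0,m-1,0)\}$ and at most one element of $\{S_m(0,m-1,0,0),S_m(0,0,0,m-1)\}$. Define recursively for $n\ge2$: $\mathcal W_n=\{P_{W}(W'):W'\in\mathcal W_1,\ W\in\mathcal W_{n-1}\}$. Here $P_W(W')$ is the quadrilateral whose ordered vertices are the images under $P_W$ of the ordered vertices of $W'$. Let $L_n=\bigcup_{W\in\mathcal W_n}W$ (closed regions) and $L_\infty=\bigcap_{n\ge1}L_n$. *)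

From Stdlib Require Import Reals Lra List.
Import ListNotations.
Open Scope R_scope.

Definition pt := (R * R)%type.

Definition comb4 (a1 a2 a3 a4 : R) (p1 p2 p3 p4 : pt) : pt :=
  (a1 * fst p1 + a2 * fst p2 + a3 * fst p3 + a4 * fst p4,
   a1 * snd p1 + a2 * snd p2 + a3 * snd p3 + a4 * snd p4).

Record quad := Quad { v1 : pt; v2 : pt; v3 : pt; v4 : pt }.

(* orientation of the turn o -> a -> b (positive = anticlockwise / left turn) *)
Definition cross (o a b : pt) : R :=
  (fst a - fst o) * (snd b - snd o) - (snd a - snd o) * (fst b - fst o).

Definition dist2 (p q : pt) : R := (fst p - fst q) ^ 2 + (snd p - snd q) ^ 2.

Definition convex_ccw (Q : quad) : Prop :=
  0 < cross (v1 Q) (v2 Q) (v3 Q) /\ 0 < cross (v2 Q) (v3 Q) (v4 Q) /\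
  0 < cross (v3 Q) (v4 Q) (v1 Q) /\ 0 < cross (v4 Q) (v1 Q) (v2 Q).

Definition shorter_diag13 (Q : quad) : Prop :=
  dist2 (v1 Q) (v3 Q) <= dist2 (v2 Q) (v4 Q).

(* (a1,a2,a3,a4) is the representation of x in Q: barycentric coordinates in
   Delta1 = Q1Q2Q3 (with a4 = 0) or in Delta2 = Q3Q4Q1 (with a2 = 0). *)
Definition is_rep (Q : quad) (x : pt) (a1 a2 a3 a4 : R) : Prop :=
  x = comb4 a1 a2 a3 a4 (v1 Q) (v2 Q) (v3 Q) (v4 Q) /\
  ((a4 = 0 /\ 0 <= a1 /\ 0 <= a2 /\ 0 <= a3 /\ a1 + a2 + a3 = 1) \/
   (a2 = 0 /\ 0 <= a1 /\ 0 <= a3 /\ 0 <= a4 /\ a1 + a3 + a4 = 1)).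

(* graph of P_V : Q -> R^2, i.e. PV Q V x y <-> x in Q and P_V(x) = y *)
Definition PV (Q V : quad) (x y : pt) : Prop :=
  exists a1 a2 a3 a4, is_rep Q x a1 a2 a3 a4 /\
    y = comb4 a1 a2 a3 a4 (v1 V) (v2 V) (v3 V) (v4 V).

Definition inA1 (m k1 k2 k3 k4 : nat) : Prop :=
  k4 = 0%nat /\ (k1 + k2 + k3 = m - 1)%nat /\ k2 <> 0%nat.
Definition inA2 (m k1 k2 k3 k4 : nat) : Prop :=
  k2 = 0%nat /\ (k1 + k3 + k4 = m - 1)%nat /\ k4 <> 0%nat.
Definition inA3 (m k1 k2 k3 k4 : nat) : Prop :=
  k2 = 0%nat /\ k4 = 0%nat /\ (k1 + k3 = m - 1)%nat.
Definition inA (m k1 k2 k3 k4 : nat) : Prop :=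
  inA1 m k1 k2 k3 k4 \/ inA2 m k1 k2 k3 k4 \/ inA3 m k1 k2 k3 k4.

(* S_m(k); the case split follows A1 (k2<>0), A2 (k2=0, k4<>0), A3 (k2=k4=0),
   which is exactly the partition of A *)
Definition Scell (Q : quad) (m k1 k2 k3 k4 : nat) : quad :=
  let c (a1 a2 a3 a4 : R) :=
    comb4 (a1 / INR m) (a2 / INR m) (a3 / INR m) (a4 / INR m)
          (v1 Q) (v2 Q) (v3 Q) (v4 Q) in
  let r1 := INR k1 in let r2 := INR k2 in
  let r3 := INR k3 in let r4 := INR k4 in
  if negb (Nat.eqb k2 0) then
    Quad (c (r1 + 1) r2 r3 0) (c r1 (r2 + 1) r3 0)
         (c r1 r2 (r3 + 1) 0) (c (r1 + 1) (r2 - 1) (r3 + 1) 0)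
  else if negb (Nat.eqb k4 0) then
    Quad (c (r1 + 1) 0 r3 r4) (c (r1 + 1) 0 (r3 + 1) (r4 - 1))
         (c r1 0 (r3 + 1) r4) (c r1 0 r3 (r4 + 1))
  else
    Quad (c (r1 + 1) 0 r3 0) (c r1 1 r3 0) (c r1 0 (r3 + 1) 0) (c r1 0 r3 1).

Definition in_Sm (Q : quad) (m : nat) (W : quad) : Prop :=
  exists k1 k2 k3 k4, inA m k1 k2 k3 k4 /\ W = Scell Q m k1 k2 k3 k4.

Definition sides (W : quad) : list (pt * pt) :=
  [(v1 W, v2 W); (v2 W, v3 W); (v3 W, v4 W); (v4 W, v1 W)].
Definition same_segment (s t : pt * pt) : Prop :=
  (fst s = fst t /\ snd s = snd t) \/ (fst s = snd t /\ snd s = fst t).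
Definition common_side (W W' : quad) : Prop :=
  exists s t, In s (sides W) /\ In t (sides W') /\ same_segment s t.

Definition adj (W W' : quad) : Prop := W <> W' /\ common_side W W'.

Fixpoint chain (e : quad -> quad -> Prop) (l : list quad) : Prop :=
  match l with
  | a :: ((b :: _) as t) => e a b /\ chain e t
  | _ => True
  end.

Definition is_tree (V : quad -> Prop) (e : quad -> quad -> Prop) : Prop :=
  (exists v, V v) /\
  (forall a b, V a -> V b ->
     exists l, Forall V l /\ chain e (a :: l) /\ last (a :: l) a = b) /\
  ~ (exists v0 l, (2 <= length l)%nat /\ NoDup (v0 :: l) /\ Forall V (v0 :: l) /\
       chain e (v0 :: l) /\ e (last l v0) v0).

Definition tree_property (W1 : quad -> Prop) : Prop := is_tree W1 adj.

Definition exit_property (Q : quad) (m : nat) (W1 : quad -> Prop) : Prop :=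
  (exists k1 k2,
     (inA m k1 k2 0 0 /\ W1 (Scell Q m k1 k2 0 0) /\ W1 (Scell Q m 0 0 k2 k1)) /\
     forall k1' k2',
       inA m k1' k2' 0 0 /\ W1 (Scell Q m k1' k2' 0 0) /\ W1 (Scell Q m 0 0 k2' k1') ->
       k1' = k1 /\ k2' = k2) /\
  (exists k1 k4,
     (inA m k1 0 0 k4 /\ W1 (Scell Q m k1 0 0 k4) /\ W1 (Scell Q m 0 k1 k4 0)) /\
     forall k1' k4',
       inA m k1' 0 0 k4' /\ W1 (Scell Q m k1' 0 0 k4') /\ W1 (Scell Q m 0 k1' k4' 0) ->
       k1' = k1 /\ k4' = k4).

Definition corner_property (Q : quad) (m : nat) (W1 : quad -> Prop) : Prop :=
  ~ (W1 (Scell Q m (m - 1) 0 0 0) /\ W1 (Scell Q m 0 0 (m - 1) 0)) /\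
  ~ (W1 (Scell Q m 0 (m - 1) 0 0) /\ W1 (Scell Q m 0 0 0 (m - 1))).

Definition labyrinth_set (Q : quad) (m : nat) (W1 : quad -> Prop) : Prop :=
  (4 <= m)%nat /\ (forall W, W1 W -> in_Sm Q m W) /\
  tree_property W1 /\ exit_property Q m W1 /\ corner_property Q m W1.

(* V = P_W(W'): vertices of V are the images under P_W of those of W' *)
Definition quad_image (Q W W' V : quad) : Prop :=
  PV Q W (v1 W') (v1 V) /\ PV Q W (v2 W') (v2 V) /\
  PV Q W (v3 W') (v3 V) /\ PV Q W (v4 W') (v4 V).

(* Wn Q W1 n = W_n for n >= 1 (the value at n = 0 is irrelevant) *)
Fixpoint Wn (Q : quad) (W1 : quad -> Prop) (n : nat) : quad -> Prop :=
  match n with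
  | O => W1
  | S O => W1
  | S p => fun V => exists W' W, W1 W' /\ Wn Q W1 p W /\ quad_image Q W W' V
  end.

Definition in_tri (A B C x : pt) : Prop :=
  exists a b c, 0 <= a /\ 0 <= b /\ 0 <= c /\ a + b + c = 1 /\
    x = comb4 a b c 0 A B C A.
Definition quad_region (W : quad) (x : pt) : Prop :=
  in_tri (v1 W) (v2 W) (v3 W) x \/ in_tri (v3 W) (v4 W) (v1 W) x.

Definition Ln (Q : quad) (W1 : quad -> Prop) (n : nat) (x : pt) : Prop :=
  exists W, Wn Q W1 n W /\ quad_region W x.

Definition Linf (Q : quad) (W1 : quad -> Prop) (x : pt) : Prop :=
  forall n, (1 <= n)%nat -> Ln Q W1 n x.

Definition interior_pt (S : pt -> Prop) (x : pt) : Prop :=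
  exists eps, 0 < eps /\ forall y, dist2 x y < eps ^ 2 -> S y.

From Stdlib Require Import Reals Lra Lia Arith List Classical.
Import ListNotations.
Open Scope R_scope.

(* Grid coordinates identify Q with the unit square: (s,t) corresponds to the point
   with weights (1-s, s-t, t, 0) in Delta1 when t <= s and (1-t, 0, s, t-s) in
   Delta2 when s <= t.  By uniqueness of the representation this chart is injective,
   and in it every cell S_m(k) is a square of the m x m grid, the maps P_W of grid
   squares act affinely, and so W_(n+1) consists of squares of side m^-(n+1) whose
   index reduced mod m is that of a cell of W_1.  The tree property alone forces
   W_1 to miss one of the four cells at the corner Q1 (they would form a 4-cycle).
   That hole recurs in every cell: the centre of the corresponding subcell of a cell
   of W_(n+1) is not in L_(n+2).  Since the chart is Lipschitz, cells shrink to
   points, so every ball around a point of L_oo contains such a centre. *)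

Definition rep_weights (a1 a2 a3 a4 : R) : Prop :=
  (a4 = 0 /\ 0 <= a1 /\ 0 <= a2 /\ 0 <= a3 /\ a1 + a2 + a3 = 1) \/
  (a2 = 0 /\ 0 <= a1 /\ 0 <= a3 /\ 0 <= a4 /\ a1 + a3 + a4 = 1).

Lemma planar_relation (d2 d3 d4 p2 p3 p4 q2 q3 q4 : R) :
  d2 * p2 + d3 * p3 + d4 * p4 = 0 -> d2 * q2 + d3 * q3 + d4 * q4 = 0 ->
  d2 * (p2 * q3 - q2 * p3) = d4 * (p3 * q4 - q3 * p4) /\
  d3 * (p2 * q3 - q2 * p3) = - d4 * (p2 * q4 - q2 * p4).
Proof.
  intros Ep Eq; split.
  - transitivity (d4 * (p3 * q4 - q3 * p4) + (d2 * p2 + d3 * p3 + d4 * p4) * q3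
                  - (d2 * q2 + d3 * q3 + d4 * q4) * p3); [ring|].
    rewrite Ep, Eq; ring.
  - transitivity (- d4 * (p2 * q4 - q2 * p4) - (d2 * p2 + d3 * p3 + d4 * p4) * q2
                  + (d2 * q2 + d3 * q3 + d4 * q4) * p2); [ring|].
    rewrite Ep, Eq; ring.
Qed.

(* The representation of a point of a convex quadrilateral is unique: the weight
   differences satisfy the relations above with positive determinants
   cross(Q1,Q2,Q3) and cross(Q1,Q3,Q4), which force them to vanish. *)
Lemma rep_unique (Q : quad) a1 a2 a3 a4 b1 b2 b3 b4 :
  convex_ccw Q -> rep_weights a1 a2 a3 a4 -> rep_weights b1 b2 b3 b4 ->
  comb4 a1 a2 a3 a4 (v1 Q) (v2 Q) (v3 Q) (v4 Q) =
  comb4 b1 b2 b3 b4 (v1 Q) (v2 Q) (v3 Q) (v4 Q) ->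
  a1 = b1 /\ a2 = b2 /\ a3 = b3 /\ a4 = b4.
Proof.
  destruct Q as [[x1 y1] [x2 y2] [x3 y3] [x4 y4]].
  unfold convex_ccw, cross, comb4; simpl.
  intros [P23 [_ [C341 _]]] Ha Hb Heq. injection Heq as Ex Ey.
  assert (Ha1 : a1 = 1 - a2 - a3 - a4) by (unfold rep_weights in Ha; lra).
  assert (Hb1 : b1 = 1 - b2 - b3 - b4) by (unfold rep_weights in Hb; lra).
  rewrite Ha1, Hb1 in Ex, Ey.
  destruct (planar_relation (a2 - b2) (a3 - b3) (a4 - b4)
              (x2 - x1) (x3 - x1) (x4 - x1) (y2 - y1) (y3 - y1) (y4 - y1))
    as [R24 R34];
    [rewrite <- (Rminus_diag_eq _ _ Ex); ring | rewrite <- (Rminus_diag_eq _ _ Ey); ring |].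
  set (D23 := (x2 - x1) * (y3 - y1) - (y2 - y1) * (x3 - x1)) in *.
  set (D34 := (x3 - x1) * (y4 - y1) - (y3 - y1) * (x4 - x1)) in *.
  assert (P34 : 0 < D34).
  { replace D34 with ((x4 - x3) * (y1 - y3) - (y4 - y3) * (x1 - x3))
      by (unfold D34; ring).
    exact C341. }
  assert (E24 : a2 = b2 /\ a4 = b4).
  { unfold rep_weights in Ha, Hb.
    destruct Ha as [(-> & Ha)|(-> & Ha)], Hb as [(-> & Hb)|(-> & Hb)]; nra. }
  destruct E24 as [-> ->].
  assert (a3 = b3) by nra.
  lra.
Qed.

(* The point with coordinates (s,t) in [0,1]^2 is
   (1-s)Q1 + (s-t)Q2 + tQ3 in Delta1 when t <= s, and (1-t)Q1 + sQ3 + (t-s)Q4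
   in Delta2 when s <= t; the corners (0,0),(1,0),(1,1),(0,1) go to Q1..Q4. *)
Definition gw1 (s t : R) : R := if Rle_dec t s then 1 - s else 1 - t.
Definition gw2 (s t : R) : R := if Rle_dec t s then s - t else 0.
Definition gw3 (s t : R) : R := if Rle_dec t s then t else s.
Definition gw4 (s t : R) : R := if Rle_dec t s then 0 else t - s.

Definition grid_pt (Q : quad) (s t : R) : pt :=
  comb4 (gw1 s t) (gw2 s t) (gw3 s t) (gw4 s t) (v1 Q) (v2 Q) (v3 Q) (v4 Q).

Ltac unfold_gw := unfold gw1, gw2, gw3, gw4 in *;
  repeat match goal with |- context [Rle_dec ?a ?b] => destruct (Rle_dec a b) end.

Lemma gw_rep_weights s t : 0 <= s <= 1 -> 0 <= t <= 1 ->
  rep_weights (gw1 s t) (gw2 s t) (gw3 s t) (gw4 s t).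
Proof. intros. unfold rep_weights; unfold_gw; [left | right]; lra. Qed.

Lemma gw_coords s t : gw2 s t + gw3 s t = s /\ gw3 s t + gw4 s t = t.
Proof. unfold_gw; lra. Qed.

Lemma gw_below s t : t <= s ->
  gw1 s t = 1 - s /\ gw2 s t = s - t /\ gw3 s t = t /\ gw4 s t = 0.
Proof. intros; unfold_gw; repeat split; lra. Qed.

Lemma gw_above s t : s <= t ->
  gw1 s t = 1 - t /\ gw2 s t = 0 /\ gw3 s t = s /\ gw4 s t = t - s.
Proof. intros; unfold_gw; repeat split; lra. Qed.

Ltac expand_gw :=
  repeat match goal with |- context [gw1 ?a ?b] =>
    first [ let H := fresh in assert (H : b <= a) by nra;
              destruct (gw_below a b H) as [-> [-> [-> ->]]]
          | let H := fresh in assert (H : a <= b) by nra;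
              destruct (gw_above a b H) as [-> [-> [-> ->]]] ] end.

Lemma grid_pt_inj Q s t s' t' : convex_ccw Q -> 0 <= s <= 1 -> 0 <= t <= 1 ->
  0 <= s' <= 1 -> 0 <= t' <= 1 -> grid_pt Q s t = grid_pt Q s' t' -> s = s' /\ t = t'.
Proof.
  intros HQ Hs Ht Hs' Ht' E.
  destruct (rep_unique Q _ _ _ _ _ _ _ _ HQ (gw_rep_weights s t Hs Ht)
              (gw_rep_weights s' t' Hs' Ht') E) as (_ & E2 & E3 & E4).
  destruct (gw_coords s t), (gw_coords s' t'). lra.
Qed.

Definition grid_square (Q : quad) (h : R) (I J : nat) : quad :=
  Quad (grid_pt Q (INR I * h) (INR J * h)) (grid_pt Q ((INR I + 1) * h) (INR J * h))
       (grid_pt Q ((INR I + 1) * h) ((INR J + 1) * h))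
       (grid_pt Q (INR I * h) ((INR J + 1) * h)).

(* This holds because a grid
   square either lies on one side of the diagonal s = t or is cut by it along its
   own diagonal, so the weights are affine on each of its two triangles. *)
Lemma grid_square_chart (Q : quad) h I J s t : 0 < h -> 0 <= s <= 1 -> 0 <= t <= 1 ->
  comb4 (gw1 s t) (gw2 s t) (gw3 s t) (gw4 s t)
    (v1 (grid_square Q h I J)) (v2 (grid_square Q h I J))
    (v3 (grid_square Q h I J)) (v4 (grid_square Q h I J))
  = grid_pt Q ((INR I + s) * h) ((INR J + t) * h).
Proof.
  intros Hh Hs Ht.
  destruct Q as [[x1 y1] [x2 y2] [x3 y3] [x4 y4]].
  unfold grid_square, grid_pt, comb4; simpl.
  assert (HIJ : INR I + 1 <= INR J \/ I = J \/ INR J + 1 <= INR I).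
  { destruct (lt_eq_lt_dec I J) as [[L|L]|L]; [left | right; left | right; right];
      try apply le_INR in L; rewrite ?S_INR in L; auto. }
  destruct (Rle_dec t s) as [r|r];
    [destruct (gw_below s t r) as [-> [-> [-> ->]]]
    |destruct (gw_above s t ltac:(lra)) as [-> [-> [-> ->]]]];
  (destruct HIJ as [L|[<-|L]]; expand_gw; f_equal; ring).
Qed.

Ltac grid_square_by_field :=
  unfold grid_square; rewrite !plus_INR; simpl (INR 1); simpl (INR 0);
  match goal with |- context [/ (?d)] =>
    assert (0 < / d) by (apply Rinv_0_lt_compat; lra) end;
  f_equal; unfold grid_pt; expand_gw; f_equal; field; lra.

Lemma Scell_grid_square Q m k1 k2 k3 k4 : (1 <= m)%nat -> inA m k1 k2 k3 k4 ->
  exists a b, (a < m)%nat /\ (b < m)%nat /\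
    Scell Q m k1 k2 k3 k4 = grid_square Q (/ INR m) a b.
Proof.
  intros Hm HA.
  pose proof (pos_INR k1) as P1. pose proof (pos_INR k3) as P3.
  destruct HA as [(-> & Hs & H2)|[(-> & Hs & H4)|(-> & -> & Hs)]].
  - exists (k2 + k3)%nat, k3. split; [lia|]. split; [lia|].
    replace m with (k1 + k2 + k3 + 1)%nat by lia.
    assert (P2 : 1 <= INR k2) by (apply (le_INR 1); lia).
    unfold Scell. replace (negb (Nat.eqb k2 0)) with true by (destruct k2; [lia|reflexivity]).
    cbv iota.
    grid_square_by_field.
  - exists k3, (k3 + k4)%nat. split; [lia|]. split; [lia|].
    replace m with (k1 + k3 + k4 + 1)%nat by lia.
    assert (P4 : 1 <= INR k4) by (apply (le_INR 1); lia).
    unfold Scell. replace (negb (Nat.eqb k4 0)) with true by (destruct k4; [lia|reflexivity]).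
    simpl (negb (Nat.eqb 0 0)). cbv iota.
    grid_square_by_field.
  - exists k3, k3. split; [lia|]. split; [lia|].
    replace m with (k1 + k3 + 1)%nat by lia.
    unfold Scell. simpl (negb (Nat.eqb 0 0)). cbv iota.
    grid_square_by_field.
Qed.

Lemma PV_grid_square Q h I J s t y : convex_ccw Q -> 0 < h ->
  0 <= s <= 1 -> 0 <= t <= 1 -> PV Q (grid_square Q h I J) (grid_pt Q s t) y ->
  y = grid_pt Q ((INR I + s) * h) ((INR J + t) * h).
Proof.
  intros HQ Hh Hs Ht (b1 & b2 & b3 & b4 & [Ex Hv] & Ey).
  destruct (rep_unique Q _ _ _ _ _ _ _ _ HQ (gw_rep_weights s t Hs Ht) Hv Ex)
    as (<- & <- & <- & <-).
  rewrite Ey. apply grid_square_chart; auto.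
Qed.

Lemma grid_index_bounds (m a : nat) : (a < m)%nat ->
  0 <= INR a * / INR m /\ (INR a + 1) * / INR m <= 1.
Proof.
  intros H. assert (Hm : 0 < INR m) by (apply lt_0_INR; lia).
  assert (Ha : INR a + 1 <= INR m) by (rewrite <- S_INR; apply le_INR; lia).
  pose proof (pos_INR a).
  split.
  - apply Rmult_le_pos; [lra | left; apply Rinv_0_lt_compat; lra].
  - apply (Rmult_le_reg_r (INR m)); [lra|]. field_simplify; lra.
Qed.

Lemma quad_image_grid_square Q m h I J a b V : convex_ccw Q -> 0 < h ->
  (a < m)%nat -> (b < m)%nat ->
  quad_image Q (grid_square Q h I J) (grid_square Q (/ INR m) a b) V ->
  V = grid_square Q (/ INR m * h) (a + I * m) (b + J * m).
Proof.
  intros HQ Hh Ha Hb (P1 & P2 & P3 & P4).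
  assert (Hm : 0 < INR m) by (apply lt_0_INR; lia).
  assert (Him : 0 < / INR m) by (apply Rinv_0_lt_compat; lra).
  destruct (grid_index_bounds m a Ha), (grid_index_bounds m b Hb).
  destruct V as [w1 w2 w3 w4]; simpl in *.
  apply PV_grid_square in P1, P2, P3, P4; auto; try (split; lra).
  subst w1 w2 w3 w4. unfold grid_square. rewrite !plus_INR, !mult_INR.
  f_equal; f_equal; field; lra.
Qed.

Lemma Wn_grid_squares Q m W1 : convex_ccw Q -> (1 <= m)%nat ->
  (forall W, W1 W -> in_Sm Q m W) ->
  forall n V, Wn Q W1 (S n) V -> exists I J,
    (INR I + 1) * (/ INR m) ^ S n <= 1 /\ (INR J + 1) * (/ INR m) ^ S n <= 1 /\
    W1 (grid_square Q (/ INR m) (I mod m) (J mod m)) /\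
    V = grid_square Q ((/ INR m) ^ S n) I J.
Proof.
  intros HQ Hm HS.
  assert (Hm0 : 0 < INR m) by (apply lt_0_INR; lia).
  assert (Him : 0 < / INR m) by (apply Rinv_0_lt_compat; lra).
  induction n as [|n IH]; intros V HV.
  - destruct (HS V HV) as (k1 & k2 & k3 & k4 & HA & EV).
    destruct (Scell_grid_square Q m k1 k2 k3 k4 Hm HA) as (a & b & Ha & Hb & E).
    rewrite E in EV. subst V.
    exists a, b. rewrite pow_1, (Nat.mod_small a m Ha), (Nat.mod_small b m Hb).
    destruct (grid_index_bounds m a Ha), (grid_index_bounds m b Hb).
    repeat split; auto.
  - destruct HV as (W' & W & HW' & HW & HI).
    destruct (IH W HW) as (I & J & BI & BJ & _ & ->).
    destruct (HS W' HW') as (k1 & k2 & k3 & k4 & HA & ->).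
    destruct (Scell_grid_square Q m k1 k2 k3 k4 Hm HA) as (a & b & Ha & Hb & E).
    rewrite E in HW', HI.
    pose proof (pow_lt _ (S n) Him) as Hh.
    exists (a + I * m)%nat, (b + J * m)%nat.
    rewrite !Nat.Div0.mod_add, (Nat.mod_small a m Ha), (Nat.mod_small b m Hb).
    destruct (grid_index_bounds m a Ha), (grid_index_bounds m b Hb).
    assert (Hrescale : forall c K, (INR (c + K * m) + 1) * (/ INR m) ^ S (S n)
                                 = ((INR c + 1) * / INR m + INR K) * (/ INR m) ^ S n).
    { intros c K. rewrite plus_INR, mult_INR. simpl. field. lra. }
    rewrite !Hrescale.
    split; [nra|]. split; [nra|]. split; [exact HW'|].
    apply (quad_image_grid_square Q m _ I J a b V HQ Hh Ha Hb HI).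
Qed.

Lemma grid_square_region Q h I J x : 0 < h -> quad_region (grid_square Q h I J) x ->
  exists s t, 0 <= s <= 1 /\ 0 <= t <= 1 /\
    x = grid_pt Q ((INR I + s) * h) ((INR J + t) * h).
Proof.
  intros Hh [(a & b & c & Ha & Hb & Hc & Hs & ->)|(a & b & c & Ha & Hb & Hc & Hs & ->)].
  - exists (b + c), c. split; [lra|]. split; [lra|].
    rewrite <- grid_square_chart by lra.
    destruct (gw_below (b + c) c ltac:(lra)) as [-> [-> [-> ->]]].
    destruct (grid_square Q h I J) as [[] [] [] []]; unfold comb4; simpl.
    replace a with (1 - (b + c)) by lra. f_equal; ring.
  - exists a, (a + b). split; [lra|]. split; [lra|].
    rewrite <- grid_square_chart by lra.
    destruct (gw_above a (a + b) ltac:(lra)) as [-> [-> [-> ->]]].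
    destruct (grid_square Q h I J) as [[] [] [] []]; unfold comb4; simpl.
    replace c with (1 - (a + b)) by lra. f_equal; ring.
Qed.

Lemma Ln_grid_cell Q m W1 n x : convex_ccw Q -> (1 <= m)%nat ->
  (forall W, W1 W -> in_Sm Q m W) -> Ln Q W1 (S n) x ->
  exists I J s t,
    (INR I + 1) * (/ INR m) ^ S n <= 1 /\ (INR J + 1) * (/ INR m) ^ S n <= 1 /\
    W1 (grid_square Q (/ INR m) (I mod m) (J mod m)) /\
    0 <= s <= 1 /\ 0 <= t <= 1 /\
    x = grid_pt Q ((INR I + s) * (/ INR m) ^ S n) ((INR J + t) * (/ INR m) ^ S n).
Proof.
  intros HQ Hm HS (V & HV & Hx).
  destruct (Wn_grid_squares Q m W1 HQ Hm HS n V HV) as (I & J & BI & BJ & HW1 & ->).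
  assert (Hh : 0 < (/ INR m) ^ S n)
    by (apply pow_lt, Rinv_0_lt_compat, lt_0_INR; lia).
  destruct (grid_square_region Q _ I J x Hh Hx) as (s & t & Hs & Ht & ->).
  exists I, J, s, t. repeat (split; [assumption|]). reflexivity.
Qed.

Lemma grid_square_inj Q h a b a' b' : convex_ccw Q -> 0 < h ->
  INR a * h <= 1 -> INR b * h <= 1 -> INR a' * h <= 1 -> INR b' * h <= 1 ->
  grid_square Q h a b = grid_square Q h a' b' -> a = a' /\ b = b'.
Proof.
  intros HQ Hh Ha Hb Ha' Hb' E.
  apply (f_equal v1) in E. simpl in E.
  pose proof (pos_INR a). pose proof (pos_INR b).
  pose proof (pos_INR a'). pose proof (pos_INR b').
  apply grid_pt_inj in E as [E1 E2]; auto; try (split; nra).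
  split; apply INR_eq, (Rmult_eq_reg_r h); lra.
Qed.

Lemma common_side_right Q h I J :
  common_side (grid_square Q h I J) (grid_square Q h (S I) J).
Proof.
  exists (v2 (grid_square Q h I J), v3 (grid_square Q h I J)),
         (v4 (grid_square Q h (S I) J), v1 (grid_square Q h (S I) J)).
  split; [simpl; auto|]. split; [simpl; auto|].
  right. unfold grid_square; cbn [v1 v2 v3 v4 fst snd]. rewrite S_INR. auto.
Qed.

Lemma common_side_up Q h I J :
  common_side (grid_square Q h I J) (grid_square Q h I (S J)).
Proof.
  exists (v3 (grid_square Q h I J), v4 (grid_square Q h I J)),
         (v1 (grid_square Q h I (S J)), v2 (grid_square Q h I (S J))).
  split; [simpl; auto|]. split; [simpl; auto|].
  right. unfold grid_square; cbn [v1 v2 v3 v4 fst snd]. rewrite S_INR. auto.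
Qed.

Lemma adj_sym W W' : adj W W' -> adj W' W.
Proof.
  intros [Hne (s & t & Hs & Ht & Hst)]. split; [congruence|].
  exists t, s. unfold same_segment in *. intuition.
Qed.

Lemma tree_no_4cycle (V : quad -> Prop) q0 q1 q2 q3 : is_tree V adj ->
  V q0 -> V q1 -> V q2 -> V q3 ->
  q0 <> q2 -> q1 <> q3 ->
  adj q0 q1 -> adj q1 q2 -> adj q2 q3 -> adj q3 q0 -> False.
Proof.
  intros (_ & _ & Hacyclic) H0 H1 H2 H3 N02 N13 A01 A12 A23 A30.
  apply Hacyclic. exists q0, [q1; q2; q3].
  split; [simpl; lia|]. split; [|split; [|split]].
  - destruct A01 as [N01 _], A12 as [N12 _], A23 as [N23 _], A30 as [N30 _].
    repeat constructor; simpl; intuition congruence.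
  - repeat constructor; assumption.
  - simpl; tauto.
  - exact A30.
Qed.

(* The tree property forces W_1 to miss one of the four cells in the corner of Q1:
   otherwise they would form a 4-cycle in G(W_1). *)
Lemma missing_corner_cell Q m W1 : convex_ccw Q -> (2 <= m)%nat -> tree_property W1 ->
  exists a0 b0, (a0 < m)%nat /\ (b0 < m)%nat /\ ~ W1 (grid_square Q (/ INR m) a0 b0).
Proof.
  intros HQ Hm Htree.
  assert (Hm2 : 2 <= INR m) by (apply (le_INR 2) in Hm; simpl in Hm; lra).
  set (h := / INR m).
  assert (Hh : 0 < h) by (apply Rinv_0_lt_compat; lra).
  assert (Hh1 : h <= 1) by (apply Rinv_le_contravar in Hm2; unfold h; lra).
  assert (Hne : forall a b a' b', (a <= 1)%nat -> (b <= 1)%nat ->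
             (a' <= 1)%nat -> (b' <= 1)%nat -> a <> a' \/ b <> b' ->
             grid_square Q h a b <> grid_square Q h a' b').
  { intros a b a' b' Ha Hb Ha' Hb' Hd E.
    apply (le_INR _ 1) in Ha, Hb, Ha', Hb'. simpl in Ha, Hb, Ha', Hb'.
    apply grid_square_inj in E; auto; try nra. lia. }
  apply NNPP. intros Hnone.
  assert (Hall : forall a b, (a <= 1)%nat -> (b <= 1)%nat -> W1 (grid_square Q h a b)).
  { intros a b Ha Hb. apply NNPP. intros Hab.
    apply Hnone. exists a, b. repeat split; [lia | lia | exact Hab]. }
  apply (tree_no_4cycle W1 _ _ _ _ Htree
           (Hall 0%nat 0%nat ltac:(lia) ltac:(lia)) (Hall 1%nat 0%nat ltac:(lia) ltac:(lia))
           (Hall 1%nat 1%nat ltac:(lia) ltac:(lia)) (Hall 0%nat 1%nat ltac:(lia) ltac:(lia)));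
    try (apply Hne; lia).
  - split; [apply Hne; lia | apply common_side_right].
  - split; [apply Hne; lia | apply common_side_up].
  - apply adj_sym. split; [apply Hne; lia | apply common_side_right].
  - apply adj_sym. split; [apply Hne; lia | apply common_side_up].
Qed.

(* Grid coordinates are Lipschitz: the weights are 2-Lipschitz in (s,t), so moving
   each coordinate by at most d moves the point by at most 2 sqrt 2 d B, where B
   bounds the coordinates of the vertices of Q. *)
Lemma gw_lipschitz s t s' t' d : Rabs (s - s') <= d -> Rabs (t - t') <= d ->
  Rabs (gw1 s t - gw1 s' t') <= 2 * d /\ Rabs (gw2 s t - gw2 s' t') <= 2 * d /\
  Rabs (gw3 s t - gw3 s' t') <= 2 * d /\ Rabs (gw4 s t - gw4 s' t') <= 2 * d.
Proof.
  intros Hs Ht.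
  assert (Hbetween : forall x, Rabs x <= d -> - d <= x <= d)
    by (intros x; unfold Rabs; destruct (Rcase_abs x); lra).
  apply Hbetween in Hs, Ht.
  unfold gw1, gw2, gw3, gw4.
  destruct (Rle_dec t s), (Rle_dec t' s'); repeat split; apply Rabs_le; lra.
Qed.

Lemma abs_comb4_le e1 e2 e3 e4 x1 x2 x3 x4 D :
  Rabs e1 <= D -> Rabs e2 <= D -> Rabs e3 <= D -> Rabs e4 <= D ->
  Rabs (e1 * x1 + e2 * x2 + e3 * x3 + e4 * x4) <= D * (Rabs x1 + Rabs x2 + Rabs x3 + Rabs x4).
Proof.
  intros H1 H2 H3 H4.
  assert (Hterm : forall e x, Rabs e <= D -> Rabs (e * x) <= D * Rabs x)
    by (intros e x He; rewrite Rabs_mult; apply Rmult_le_compat_r; auto using Rabs_pos).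
  pose proof (Rabs_triang (e1 * x1 + e2 * x2 + e3 * x3) (e4 * x4)).
  pose proof (Rabs_triang (e1 * x1 + e2 * x2) (e3 * x3)).
  pose proof (Rabs_triang (e1 * x1) (e2 * x2)).
  pose proof (Hterm e1 x1 H1). pose proof (Hterm e2 x2 H2).
  pose proof (Hterm e3 x3 H3). pose proof (Hterm e4 x4 H4).
  lra.
Qed.

Definition coord_bound (Q : quad) : R :=
  Rabs (fst (v1 Q)) + Rabs (fst (v2 Q)) + Rabs (fst (v3 Q)) + Rabs (fst (v4 Q)) +
  Rabs (snd (v1 Q)) + Rabs (snd (v2 Q)) + Rabs (snd (v3 Q)) + Rabs (snd (v4 Q)).

Lemma grid_pt_lipschitz Q s t s' t' d : Rabs (s - s') <= d -> Rabs (t - t') <= d ->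
  dist2 (grid_pt Q s t) (grid_pt Q s' t') <= 8 * d ^ 2 * coord_bound Q ^ 2.
Proof.
  intros Hs Ht.
  destruct (gw_lipschitz s t s' t' d Hs Ht) as (L1 & L2 & L3 & L4).
  assert (Hd : 0 <= d) by (pose proof (Rabs_pos (s - s')); lra).
  unfold dist2, grid_pt, comb4, coord_bound.
  destruct Q as [[x1 y1] [x2 y2] [x3 y3] [x4 y4]]; cbn [fst snd v1 v2 v3 v4].
  set (e1 := gw1 s t - gw1 s' t') in *. set (e2 := gw2 s t - gw2 s' t') in *.
  set (e3 := gw3 s t - gw3 s' t') in *. set (e4 := gw4 s t - gw4 s' t') in *.
  set (X := e1 * x1 + e2 * x2 + e3 * x3 + e4 * x4).
  set (Y := e1 * y1 + e2 * y2 + e3 * y3 + e4 * y4).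
  match goal with |- ?DX ^ 2 + ?DY ^ 2 <= _ =>
    replace DX with X by (unfold X, e1, e2, e3, e4; ring);
    replace DY with Y by (unfold Y, e1, e2, e3, e4; ring) end.
  pose proof (abs_comb4_le e1 e2 e3 e4 x1 x2 x3 x4 (2 * d) L1 L2 L3 L4) as AX.
  pose proof (abs_comb4_le e1 e2 e3 e4 y1 y2 y3 y4 (2 * d) L1 L2 L3 L4) as AY.
  fold X in AX. fold Y in AY.
  rewrite <- (pow2_abs X), <- (pow2_abs Y).
  pose proof (Rabs_pos X). pose proof (Rabs_pos Y).
  pose proof (Rabs_pos x1). pose proof (Rabs_pos x2).
  pose proof (Rabs_pos x3). pose proof (Rabs_pos x4).
  pose proof (Rabs_pos y1). pose proof (Rabs_pos y2).
  pose proof (Rabs_pos y3). pose proof (Rabs_pos y4).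
  nra.
Qed.

Lemma grid_square_diameter Q h (I J : nat) s t s' t' : 0 < h ->
  0 <= s <= 1 -> 0 <= t <= 1 -> 0 <= s' <= 1 -> 0 <= t' <= 1 ->
  dist2 (grid_pt Q ((INR I + s) * h) ((INR J + t) * h))
        (grid_pt Q ((INR I + s') * h) ((INR J + t') * h)) <= 8 * h ^ 2 * coord_bound Q ^ 2.
Proof.
  intros Hh Hs Ht Hs' Ht'.
  apply grid_pt_lipschitz; apply Rabs_le.
  - replace ((INR I + s) * h - (INR I + s') * h) with ((s - s') * h) by ring. nra.
  - replace ((INR J + t) * h - (INR J + t') * h) with ((t - t') * h) by ring. nra.
Qed.

Lemma grid_squares_shrink Q (m : nat) eps : (2 <= m)%nat -> 0 < eps ->
  exists n, 8 * ((/ INR m) ^ S n) ^ 2 * coord_bound Q ^ 2 < eps ^ 2.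
Proof.
  intros Hm Heps.
  assert (Hm2 : 2 <= INR m) by (apply (le_INR 2) in Hm; simpl in Hm; lra).
  assert (Him : 0 < / INR m < 1).
  { split; [apply Rinv_0_lt_compat; lra|].
    rewrite <- Rinv_1. apply Rinv_lt_contravar; lra. }
  set (K := 3 * coord_bound Q + 1).
  assert (HB : 0 <= coord_bound Q)
    by (unfold coord_bound; pose proof Rabs_pos as P;
        pose proof (P (fst (v1 Q))); pose proof (P (fst (v2 Q)));
        pose proof (P (fst (v3 Q))); pose proof (P (fst (v4 Q)));
        pose proof (P (snd (v1 Q))); pose proof (P (snd (v2 Q)));
        pose proof (P (snd (v3 Q))); pose proof (P (snd (v4 Q))); lra).
  destruct (pow_lt_1_zero (/ INR m) ltac:(rewrite Rabs_right; lra) (eps / K)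
              ltac:(unfold K; apply Rdiv_lt_0_compat; lra)) as [N HN].
  exists N.
  specialize (HN (S N) ltac:(lia)).
  set (h := (/ INR m) ^ S N) in *.
  assert (Hh : 0 < h) by (apply pow_lt; lra).
  rewrite Rabs_right in HN by lra.
  assert (HhK : h * K < eps)
    by (apply (Rmult_lt_compat_r K) in HN; [|unfold K; lra];
        unfold Rdiv in HN; rewrite Rmult_assoc, Rinv_l in HN; unfold K in *; lra).
  assert (0 <= h * K) by (unfold K; nra).
  unfold K in *. nra.
Qed.

Lemma index_of_half_offset (p q : nat) (s : R) : 0 <= s <= 1 ->
  INR p + / 2 = INR q + s -> p = q.
Proof.
  intros Hs E.
  assert (q < S p)%nat by (apply INR_lt; rewrite S_INR; lra).
  assert (p < S q)%nat by (apply INR_lt; rewrite S_INR; lra).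
  lia.
Qed.

(* The hole repeats in every cell: if W_1 misses the cell (a0,b0), then inside every
   cell (I,J) of W_(n+1) the centre of its subcell (a0,b0) does not lie in L_(n+2),
   because the only cell of W_(n+2) that could contain it has local index (a0,b0). *)
Lemma hole_in_every_cell Q m W1 n I J a0 b0 : convex_ccw Q -> (1 <= m)%nat ->
  (forall W, W1 W -> in_Sm Q m W) ->
  (a0 < m)%nat -> (b0 < m)%nat -> ~ W1 (grid_square Q (/ INR m) a0 b0) ->
  (INR I + 1) * (/ INR m) ^ S n <= 1 -> (INR J + 1) * (/ INR m) ^ S n <= 1 ->
  ~ Ln Q W1 (S (S n))
      (grid_pt Q ((INR I + (INR a0 + / 2) * / INR m) * (/ INR m) ^ S n)
                 ((INR J + (INR b0 + / 2) * / INR m) * (/ INR m) ^ S n)).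
Proof.
  intros HQ Hm HS Ha0 Hb0 Hno BI BJ HL.
  destruct (Ln_grid_cell Q m W1 (S n) _ HQ Hm HS HL)
    as (I' & J' & s & t & BI' & BJ' & HW1 & Hs & Ht & E).
  assert (Hm0 : 0 < INR m) by (apply lt_0_INR; lia).
  assert (Him : 0 < / INR m) by (apply Rinv_0_lt_compat; lra).
  set (h := (/ INR m) ^ S n) in *.
  assert (Hh : 0 < h) by (apply pow_lt; lra).
  change ((/ INR m) ^ S (S n)) with (/ INR m * h) in *.
  assert (Hh' : 0 < / INR m * h) by nra.
  destruct (grid_index_bounds m a0 Ha0), (grid_index_bounds m b0 Hb0).
  pose proof (pos_INR I). pose proof (pos_INR J).
  pose proof (pos_INR I'). pose proof (pos_INR J').
  apply grid_pt_inj in E as [EI EJ]; auto; try (split; nra).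
  assert (HI' : INR (a0 + I * m) + / 2 = INR I' + s).
  { rewrite plus_INR, mult_INR. apply (Rmult_eq_reg_r (/ INR m * h)); [|nra].
    rewrite <- EI. field. lra. }
  assert (HJ' : INR (b0 + J * m) + / 2 = INR J' + t).
  { rewrite plus_INR, mult_INR. apply (Rmult_eq_reg_r (/ INR m * h)); [|nra].
    rewrite <- EJ. field. lra. }
  apply index_of_half_offset in HI', HJ'; auto. subst I' J'.
  rewrite !Nat.Div0.mod_add, !Nat.mod_small in HW1 by lia.
  exact (Hno HW1).
Qed.

Theorem theorem4p2 (Q : quad) (m : nat) (W1 : quad -> Prop) :
  convex_ccw Q -> shorter_diag13 Q -> (4 <= m)%nat ->
  labyrinth_set Q m W1 ->
  forall x : pt, ~ interior_pt (Linf Q W1) x.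
Proof.
  intros HQ _ Hm (_ & HS & Htree & _) x (eps & Heps & Hball).
  destruct (missing_corner_cell Q m W1 HQ ltac:(lia) Htree) as (a0 & b0 & Ha0 & Hb0 & Hno).
  destruct (grid_squares_shrink Q m eps ltac:(lia) Heps) as [n Hsmall].
  (* x lies in a cell of W_(n+1) ... *)
  assert (Hx : Linf Q W1 x)
    by (apply Hball; unfold dist2; rewrite !Rminus_diag; nra).
  destruct (Ln_grid_cell Q m W1 n x HQ ltac:(lia) HS (Hx (S n) ltac:(lia)))
    as (I & J & s & t & BI & BJ & _ & Hs & Ht & ->).
  (* ... whose hole, within eps of x, is in the interior but not in L_(n+2). *)
  apply (hole_in_every_cell Q m W1 n I J a0 b0 HQ ltac:(lia) HS Ha0 Hb0 Hno BI BJ).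
  apply Hball; [|lia].
  assert (Him : 0 < / INR m) by (apply Rinv_0_lt_compat, lt_0_INR; lia).
  destruct (grid_index_bounds m a0 Ha0), (grid_index_bounds m b0 Hb0).
  eapply Rle_lt_trans; [apply grid_square_diameter | exact Hsmall];
    try (apply pow_lt; exact Him); lra.
Qed.
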